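(* Let $H$ be a real Hilbert space, $t\in(0,1]$ and $b\in(0,1]$. Then for every $m\ge 1$ and every $\alpha$ with $0<\alpha \le \frac{(2-b)t}{(2-b)t+2}$, $$ \gamma_m^{t,b}(\alpha,H) \le \bigl(1+mb(2-b) t^2\bigr)^{-\alpha/2}. $$ Equivalently: for every dictionary $\mathcal D$ of $H$, every $f\in H$, $f\neq 0$, with $\|f\|_{A_1(\mathcal D)}<\infty$, and every realization of the WGA$(t,b)$, $$\|f-G^{t,b}_m(f,\mathcal D)\|\le \|f\|^{1-\alpha}\|f\|_{A_1(\mathcal D)}^{\alpha}\bigl(1+mb(2-b)t^2\bigr)^{-\alpha/2}.$$
   Context: $H$ is a real Hilbert space with inner product $\langle\cdot,\cdot\rangle$ and norm $\|\cdot\|$. A (symmetric) dictionary is a set $\mathcal D\subset H$ with $\|g\|=1$ for all $g\in\mathcal D$, $\overline{\operatorname{span}}\,\mathcal D=H$, and $g\in\mathcal D\Rightarrow -g\in\mathcal D$. $A_1(\mathcal D)$ is the closure of the convex hull of $\mathcal D$, and $\|f\|_{A_1(\mathcal D)}:=\inf\{M: f/M\in A_1(\mathcal D)\}$. Weak Greedy Algorithm with parameter $b$, WGA$(t,b)$: set $f_0:=f$; for $m\ge1$ choose any $\varphi_m\in\mathcal D$ with $\langle f_{m-1},\varphi_m\rangle\ge t\sup_{g\in\mathcal D}\langle f_{m-1},g\rangle$, set $f_m:=f_{m-1}-b\langle f_{m-1},\varphi_m\rangle\varphi_m$ and $G^{t,b}_m(f,\mathcal D):=b\sum_{j=1}^m\langle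 f_{j-1},\varphi_j\rangle\varphi_j$. For $\alpha\in(0,1]$, $$\gamma_m^{t,b}(\alpha,H):=\sup_{\mathcal D}\sup_f\sup_{G^{t,b}_m(f,\mathcal D)}\frac{\|f-G^{t,b}_m(f,\mathcal D)\|}{\|f\|^{1-\alpha}\|f\|_{A_1(\mathcal D)}^{\alpha}},$$ the suprema being over all dictionaries $\mathcal D$, all $f\ne0$ with $\|f\|_{A_1(\mathcal D)}<\infty$, and all possible realizations of the algorithm. *)

From HB Require Import structures.
From mathcomp Require Import all_boot all_order all_algebra.
From mathcomp Require Import all_classical all_reals all_analysis.
Set Implicit Arguments. Unset Strict Implicit. Unset Printing Implicit Defensive.
Import Order.TTheory GRing.Theory Num.Theory.
Import numFieldNormedType.Exports.
Local Open Scope classical_set_scope.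
Local Open Scope ring_scope.

Section Defs.
Variables (R : realType) (H : completeNormedModType R).

(* ip is a real inner product on H inducing the norm of H:
   symmetric, linear in the first argument, and |x|^2 = <x,x>.
   Together with completeness of H this makes H a real Hilbert space. *)
Definition inner_product (ip : H -> H -> R) : Prop :=
  (forall x y, ip x y = ip y x) /\
  (forall (a : R) x y z, ip (a *: x + y) z = a * ip x z + ip y z) /\
  (forall x, `|x| ^+ 2 = ip x x).

Definition lin_span (D : set H) : set H :=
  [set x | exists (n : nat) (c : 'I_n -> R) (g : 'I_n -> H),
     (forall i, D (g i)) /\ x = \sum_(i < n) c i *: g i].

Definition dictionary (D : set H) : Prop :=
  (forall g, D g -> `|g| = 1) /\
  closure (lin_span D) = setT /\
  (forall g, D g -> D (- g)).

Definition conv_hull (D : set H) : set H :=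
  [set x | exists (n : nat) (c : 'I_n -> R) (g : 'I_n -> H),
     (forall i, 0 <= c i) /\ \sum_(i < n) c i = 1 /\
     (forall i, D (g i)) /\ x = \sum_(i < n) c i *: g i].

Definition A1 (D : set H) : set H := closure (conv_hull D).

Definition A1norm (D : set H) (f : H) : \bar R :=
  ereal_inf [set (M%:E) | M in [set M : R | 0 < M /\ A1 D (M^-1 *: f)]].

(* residuals of the WGA(t,b) driven by the choices phi 1, phi 2, ... :
   wga_res 0 = f,  wga_res j = wga_res (j-1) - b <wga_res (j-1), phi j> phi j *)
Fixpoint wga_res (ip : H -> H -> R) (b : R) (f : H) (phi : nat -> H) (j : nat) : H :=
  match j with
  | 0 => f
  | j'.+1 => wga_res ip b f phi j' - (b * ip (wga_res ip b f phi j') (phi j)) *: phi j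
  end.

Definition wga_approx (ip : H -> H -> R) (b : R) (f : H) (phi : nat -> H) (m : nat) : H :=
  b *: \sum_(1 <= j < m.+1) (ip (wga_res ip b f phi j.-1) (phi j) *: phi j).

Definition wga_realization (ip : H -> H -> R) (t b : R) (D : set H) (f : H)
    (phi : nat -> H) (m : nat) : Prop :=
  forall j : nat, (1 <= j <= m)%N ->
    D (phi j) /\
    ip (wga_res ip b f phi j.-1) (phi j) >=
      t * sup [set ip (wga_res ip b f phi j.-1) g | g in D].

End Defs.

From HB Require Import structures.
From mathcomp Require Import all_boot all_order all_algebra.
From mathcomp Require Import all_classical all_reals all_analysis.
From mathcomp Require Import ring lra.
Set Implicit Arguments. Unset Strict Implicit. Unset Printing Implicit Defensive.
Import Order.TTheory GRing.Theory Num.Theory.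
Import numFieldNormedType.Exports.
Local Open Scope classical_set_scope.
Local Open Scope ring_scope.

(* Write f_j for the residuals, c_(j+1) = <f_j, phi_(j+1)> >= 0 and
   B_j = |f|_A1 + b (c_1 + ... + c_j).  Since f - f_j is b times a nonnegative
   combination of dictionary elements, <h, f_j> <= B_j sup_(g in D) <h, g>; with
   h = f_j and the weak greedy choice this gives t |f_j|^2 <= c_(j+1) B_j.  As
   |f_(j+1)|^2 = |f_j|^2 - b (2 - b) c_(j+1)^2 and B_(j+1) = B_j + b c_(j+1),
   induction yields |f_j|^2 (1 + j b (2 - b) t^2) <= B_j^2 and, by concavity of
   ln and the restriction on alpha, that |f_j|^(2 (1 - alpha)) B_j^(2 alpha) is
   nonincreasing.  Interpolating |f_m| = |f_m|^(1 - alpha) |f_m|^alpha between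
   the two bounds gives the estimate. *)

Lemma sq_bound_step (R : realFieldType) (a c B t beta n : R) :
  0 <= beta -> 0 <= n -> 0 <= t * a -> t * a <= c * B ->
  0 <= a - beta * c ^+ 2 -> a * (1 + n * (beta * t ^+ 2)) <= B ^+ 2 ->
  (a - beta * c ^+ 2) * (1 + (n + 1) * (beta * t ^+ 2)) <= B ^+ 2.
Proof.
move=> beta_ge0 n_ge0 ta_ge0 ta_le a'_ge0 ha.
have k_ge0 : 0 <= beta * t ^+ 2 by rewrite mulr_ge0 ?sqr_ge0.
have a'_le : a - beta * c ^+ 2 <= a by rewrite gerBl mulr_ge0 ?sqr_ge0.
have [a_le0|a_gt0] := lerP a 0.
  suff -> : a - beta * c ^+ 2 = 0 by rewrite mul0r sqr_ge0.
  by apply/eqP; rewrite eq_le a'_ge0 (le_trans a'_le a_le0).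
(* As a - beta c^2 <= a, it suffices that beta (t a)^2 <= beta (c B)^2. *)
rewrite -(ler_pM2l a_gt0).
have ih_scaled : a * ((a - beta * c ^+ 2) * (1 + n * (beta * t ^+ 2))) <=
          (a - beta * c ^+ 2) * B ^+ 2 by rewrite mulrCA ler_wpM2l.
have ta_sq_le : beta * (t * a) ^+ 2 <= beta * (c * B) ^+ 2 by rewrite ler_wpM2l //; nra.
have a'_le_scaled : (a - beta * c ^+ 2) * (beta * t ^+ 2 * a) <= a * (beta * t ^+ 2 * a).
  by rewrite ler_wpM2r // mulr_ge0 // ltW.
nra.
Qed.

Lemma ln_le_tangent (R : realType) (u v : R) :
  0 < u -> 0 < v -> ln v <= ln u + (v - u) / u.
Proof.
move=> u_gt0 v_gt0.
have vu : 1 + (v - u) / u = v / u by rewrite mulrBl divff ?gt_eqF // addrC subrK.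
have x_gt : -1 < (v - u) / u by rewrite -subr_gt0 opprK addrC vu divr_gt0.
have := le_ln1Dx x_gt; rewrite vu lnM ?posrE ?invr_gt0 // lnV ?posrE //; lra.
Qed.

Lemma ln_potential_step (R : realType) (a c B t b alpha : R) :
  0 <= b <= 2 -> 0 <= alpha <= 1 -> 2 * alpha <= (1 - alpha) * ((2 - b) * t) ->
  0 < B -> 0 <= c -> t * a <= c * B -> 0 < a - b * (2 - b) * c ^+ 2 ->
  (1 - alpha) * ln (a - b * (2 - b) * c ^+ 2) + 2 * alpha * ln (B + b * c)
    <= (1 - alpha) * ln a + 2 * alpha * ln B.
Proof.
move=> /andP[b_ge0 b_le2] /andP[alpha_ge0 alpha_le1] h_alpha B_gt0 c_ge0 ta_le a'_gt0.
have bc_ge0 : 0 <= b * c by rewrite mulr_ge0.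
have alpha'_ge0 : 0 <= 1 - alpha by rewrite subr_ge0.
have a_gt0 : 0 < a.
  by apply: lt_le_trans a'_gt0 _; rewrite gerBl !mulr_ge0 ?sqr_ge0 ?subr_ge0.
have ln_a' := ln_le_tangent a_gt0 a'_gt0.
have ln_B := ln_le_tangent B_gt0 (ltr_wpDr bc_ge0 B_gt0).
have key : 2 * alpha * a <= (1 - alpha) * (2 - b) * (c * B).
  have : (1 - alpha) * (2 - b) * (t * a) <= (1 - alpha) * (2 - b) * (c * B).
    by rewrite ler_wpM2l // mulr_ge0 // subr_ge0.
  nra.
have gain : 2 * alpha * (b * c / B) <= (1 - alpha) * (b * (2 - b) * c ^+ 2 / a).
  have -> : 2 * alpha * (b * c / B) = 2 * alpha * a * (b * c) / (a * B).
    by field; rewrite !gt_eqF.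
  have -> : (1 - alpha) * (b * (2 - b) * c ^+ 2 / a) =
            (1 - alpha) * (2 - b) * (c * B) * (b * c) / (a * B).
    by field; rewrite !gt_eqF.
  by apply: ler_wpM2r; [rewrite invr_ge0 mulr_ge0 ?ltW | exact: ler_wpM2r].
have := ler_wpM2l alpha'_ge0 ln_a'.
have := ler_wpM2l (mulr_ge0 (ler0n _ 2) alpha_ge0) ln_B.
lra.
Qed.

Lemma le_powR_of_ln_potential (R : realType) (r r0 A B alpha k : R) :
  0 < r -> 0 < r0 -> 0 < A -> 0 < B -> 0 <= k -> 0 <= alpha ->
  r ^+ 2 * (1 + k) <= B ^+ 2 ->
  (1 - alpha) * ln (r ^+ 2) + 2 * alpha * ln B
    <= (1 - alpha) * ln (r0 ^+ 2) + 2 * alpha * ln A ->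
  r <= r0 `^ (1 - alpha) * A `^ alpha * (1 + k) `^ (- (alpha / 2)).
Proof.
move=> r_gt0 r0_gt0 A_gt0 B_gt0 k_ge0 alpha_ge0 h_sq h_ln.
have k1_gt0 : 0 < 1 + k by rewrite ltr_wpDr.
have : ln (r ^+ 2 * (1 + k)) <= ln (B ^+ 2) by rewrite ler_ln ?posrE ?mulr_gt0 ?exprn_gt0.
rewrite lnM ?posrE ?exprn_gt0 // !lnXn // => h_lnB.
move: h_ln; rewrite !lnXn // => h_ln.
rewrite /powR !gt_eqF // -!expRD -[leLHS]lnK ?posrE // ler_expR.
have := ler_wpM2l alpha_ge0 h_lnB; move: h_ln h_lnB; rewrite !mulr2n.
have -> : alpha / 2 = alpha * 2^-1 by [].
lra.
Qed.

Section InnerProduct.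
Variables (R : realType) (H : completeNormedModType R) (ip : H -> H -> R).
Hypothesis hip : inner_product ip.

Lemma ipC x y : ip x y = ip y x.
Proof. by case: hip. Qed.

Lemma ipDl x y z : ip (x + y) z = ip x z + ip y z.
Proof. by case: hip => _ [lin _]; rewrite -[x]scale1r lin mul1r scale1r. Qed.

Lemma ip0l z : ip 0 z = 0.
Proof. by apply/(addrI (ip 0 z)); rewrite -ipDl !addr0. Qed.

Lemma ipZl a x z : ip (a *: x) z = a * ip x z.
Proof. by case: hip => _ [lin _]; have := lin a x 0 z; rewrite addr0 ip0l addr0. Qed.

Lemma ipNl x z : ip (- x) z = - ip x z.
Proof. by rewrite -scaleN1r ipZl mulN1r. Qed.

Lemma ipBl x y z : ip (x - y) z = ip x z - ip y z.
Proof. by rewrite ipDl ipNl. Qed.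

Lemma ip0r z : ip z 0 = 0.
Proof. by rewrite ipC ip0l. Qed.

Lemma ipDr x y z : ip z (x + y) = ip z x + ip z y.
Proof. by rewrite !(ipC z) ipDl. Qed.

Lemma ipZr a x z : ip z (a *: x) = a * ip z x.
Proof. by rewrite !(ipC z) ipZl. Qed.

Lemma ipNr x z : ip z (- x) = - ip z x.
Proof. by rewrite !(ipC z) ipNl. Qed.

Lemma ipBr x y z : ip z (x - y) = ip z x - ip z y.
Proof. by rewrite ipDr ipNr. Qed.

Lemma ipxx x : ip x x = `|x| ^+ 2.
Proof. by case: hip => _ [_ ->]. Qed.

Lemma ip_sumr h n (F : 'I_n -> H) : ip h (\sum_(i < n) F i) = \sum_(i < n) ip h (F i).
Proof. exact: (big_morph (ip h) (fun x y => ipDr x y h) (ip0r h)). Qed.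

Lemma cauchy_schwarz x y : ip x y <= `|x| * `|y|.
Proof.
have [->|x_neq0] := eqVneq x 0; first by rewrite ip0l normr0 mul0r.
have [->|y_neq0] := eqVneq y 0; first by rewrite ip0r normr0 mulr0.
have xy_gt0 : 0 < `|x| * `|y| by rewrite mulr_gt0 ?normr_gt0.
have : 0 <= ip (`|y| *: x - `|x| *: y) (`|y| *: x - `|x| *: y) by rewrite ipxx sqr_ge0.
rewrite !ipBl !ipBr !ipZl !ipZr !ipxx (ipC y x) => sq_ge0.
by rewrite -(ler_pM2l xy_gt0); nra.
Qed.

Lemma sqr_normBZ h k p : `|p| = 1 ->
  `|h - k *: p| ^+ 2 = `|h| ^+ 2 - 2 * k * ip h p + k ^+ 2.
Proof.
move=> p1; rewrite -ipxx !ipBl !ipBr !ipZl !ipZr !ipxx (ipC p h) p1; ring.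
Qed.

Lemma ip_le_closure (C : set H) h s x :
  (forall y, C y -> ip h y <= s) -> closure C x -> ip h x <= s.
Proof.
move=> C_le Cx; rewrite leNgt; apply/negP => s_lt.
pose e := (ip h x - s) / (`|h| + 1).
have e_gt0 : 0 < e by rewrite divr_gt0 ?subr_gt0 // ltr_wpDl.
have [y [Cy]] := Cx _ (nbhsx_ballx x e e_gt0).
rewrite -ball_normE /ball_ /= => xy_lt.
have := C_le _ Cy; have := cauchy_schwarz h (x - y); rewrite ipBr.
have : `|h| * `|x - y| <= `|h| * e by rewrite ler_wpM2l // ltW.
have : (`|h| + 1) * e = ip h x - s by rewrite /e mulrC divfK // gt_eqF // ltr_wpDl.
nra.
Qed.

Lemma ip_le_conv_hull (D : set H) h s x :
  (forall g, D g -> ip h g <= s) -> conv_hull D x -> ip h x <= s.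
Proof.
move=> D_le [n [c [g [c_ge0 [c_sum1 [Dg ->]]]]]].
rewrite ip_sumr (eq_bigr _ (fun i _ => ipZr (c i) (g i) h)).
apply: (@le_trans _ _ (\sum_(i < n) c i * s)); last by rewrite -mulr_suml c_sum1 mul1r.
by apply: ler_sum => i _; rewrite ler_wpM2l ?D_le.
Qed.

End InnerProduct.

Definition sup_ip (R : realType) (H : completeNormedModType R) (ip : H -> H -> R)
  (D : set H) (h : H) : R := sup [set ip h g | g in D].

Section Dictionary.
Variables (R : realType) (H : completeNormedModType R) (ip : H -> H -> R) (D : set H).
Hypotheses (hip : inner_product ip) (D_unit : forall g, D g -> `|g| = 1).

Lemma ip_le_sup_ip h g : D g -> ip h g <= sup_ip ip D h.
Proof.
move=> Dg; apply: ub_le_sup; last by exists g.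
exists `|h| => _ [g' Dg' <-].
by rewrite -[leRHS]mulr1 -(D_unit Dg') cauchy_schwarz.
Qed.

Lemma sup_ip_le_norm h : sup_ip ip D h <= `|h|.
Proof.
have [->|/set0P[g Dg]] := eqVneq D set0; first by rewrite /sup_ip image_set0 sup0.
apply: ge_sup; first by exists (ip h g), g.
by move=> _ [g' Dg' <-]; rewrite -[leRHS]mulr1 -(D_unit Dg') cauchy_schwarz.
Qed.

Lemma sup_ip_ge0 h : (forall g, D g -> D (- g)) -> 0 <= sup_ip ip D h.
Proof.
move=> D_sym; have [->|/set0P[g Dg]] := eqVneq D set0.
  by rewrite /sup_ip image_set0 sup0.
have := ip_le_sup_ip h (D_sym _ Dg); have := ip_le_sup_ip h Dg.
rewrite ipNr //; lra.
Qed.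

Lemma A1norm_ge0 f : (0 <= A1norm D f)%E.
Proof. by apply: le_ereal_inf_tmp => _ [M [M_gt0 _] <-]; rewrite lee_fin ltW. Qed.

Lemma fine_A1norm_ge0 f : 0 <= fine (A1norm D f).
Proof. exact/fine_ge0/A1norm_ge0. Qed.

Lemma ip_le_A1norm h s f : (A1norm D f < +oo)%E ->
  (forall g, D g -> ip h g <= s) -> ip h f <= fine (A1norm D f) * s.
Proof.
move=> A1f D_le; set E := [set M : R | 0 < M /\ A1 D (M^-1 *: f)].
have A1fE : (fine (A1norm D f))%:E = A1norm D f.
  by rewrite fineK // ge0_fin_numE // A1norm_ge0.
have A1_le M : E M -> fine (A1norm D f) <= M.
  by move=> EM; rewrite -lee_fin A1fE; apply: ereal_inf_lbound; exists M.
have ip_le M : E M -> ip h f <= M * s.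
  move=> [M_gt0 A1M]; have := ip_le_closure hip (fun y => ip_le_conv_hull hip D_le) A1M.
  by rewrite ipZr // -ler_pdivrMl // mulrC.
have [M EM] : E !=set0.
  apply/set0P/negP => /eqP E0; move: A1f.
  by rewrite /A1norm -/E E0 image_set0 ereal_inf0.
have [s_gt0|s_le0] := ltP 0 s.
  rewrite -ler_pdivrMr // -lee_fin A1fE.
  apply: le_ereal_inf_tmp => _ [M' EM' <-].
  by rewrite lee_fin ler_pdivrMr // ip_le.
by apply: le_trans (ip_le M EM) _; rewrite ler_wnM2r // A1_le.
Qed.

Lemma norm_le_A1norm f : (A1norm D f < +oo)%E -> `|f| <= fine (A1norm D f).
Proof.
move=> A1f; have [->|f_neq0] := eqVneq f 0; first by rewrite normr0 fine_A1norm_ge0.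
have f_gt0 : 0 < `|f| by rewrite normr_gt0.
rewrite -(ler_pM2l f_gt0) -expr2 -(ipxx hip) mulrC.
apply: le_trans (ip_le_A1norm A1f (ip_le_sup_ip f)) _.
by rewrite ler_wpM2l ?fine_A1norm_ge0 ?sup_ip_le_norm.
Qed.

End Dictionary.

Lemma wga_resE (R : realType) (H : completeNormedModType R) (ip : H -> H -> R) b f phi m :
  wga_res ip b f phi m = f - wga_approx ip b f phi m.
Proof.
elim: m => [|m IH]; first by rewrite /wga_approx big_geq // scaler0 subr0.
rewrite /wga_approx big_nat_recr //= scalerDr -/(wga_approx ip b f phi m).
by rewrite opprD addrA -IH scalerA.
Qed.

Section WGA.
Variables (R : realType) (H : completeNormedModType R) (ip : H -> H -> R).
Variables (t b : R) (D : set H) (f : H) (phi : nat -> H) (m : nat).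
Hypotheses (hip : inner_product ip) (t_gt0 : 0 < t) (b_gt0 : 0 < b) (b_lt2 : b < 2).
Hypotheses (D_unit : forall g, D g -> `|g| = 1) (D_sym : forall g, D g -> D (- g)).
Hypotheses (A1f : (A1norm D f < +oo)%E) (hreal : wga_realization ip t b D f phi m).

Local Notation res := (wga_res ip b f phi).
Local Notation A := (fine (A1norm D f)).

Let beta_ge0 : 0 <= b * (2 - b).
Proof. by rewrite mulr_ge0 ?subr_ge0 // ltW. Qed.

(* [wga_coef j] is the coefficient c_(j+1) of step j+1, computed from [res j]. *)
Definition wga_coef j := ip (res j) (phi j.+1).

Definition res_bound j := A + b * \sum_(i < j) wga_coef i.

Lemma wga_resS j : res j.+1 = res j - (b * wga_coef j) *: phi j.+1.
Proof. by []. Qed.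

Lemma res_bound0 : res_bound 0 = A.
Proof. by rewrite /res_bound big_ord0 mulr0 addr0. Qed.

Lemma res_boundS j : res_bound j.+1 = res_bound j + b * wga_coef j.
Proof. by rewrite /res_bound big_ord_recr mulrDr addrA. Qed.

Lemma wga_step j : (j < m)%N -> D (phi j.+1) /\ t * sup_ip ip D (res j) <= wga_coef j.
Proof. exact: hreal j.+1. Qed.

Lemma wga_coef_ge0 j : (j < m)%N -> 0 <= wga_coef j.
Proof.
move=> /wga_step[_]; apply: le_trans.
exact: mulr_ge0 (ltW t_gt0) (sup_ip_ge0 hip D_unit _ D_sym).
Qed.

Lemma A1norm_le_res_bound j : (j <= m)%N -> A <= res_bound j.
Proof.
move=> jm; rewrite lerDl; apply: mulr_ge0 (ltW b_gt0) _; apply: sumr_ge0 => i _.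
exact/wga_coef_ge0/(leq_trans (ltn_ord i)).
Qed.

Lemma res_bound_ge0 j : (j <= m)%N -> 0 <= res_bound j.
Proof. by move/A1norm_le_res_bound; apply: le_trans (fine_A1norm_ge0 _ _). Qed.

Lemma ip_le_res_bound j h : (j <= m)%N -> ip h (res j) <= res_bound j * sup_ip ip D h.
Proof.
elim: j => [_|j IH jm].
  by rewrite res_bound0; apply: ip_le_A1norm => // g; apply: ip_le_sup_ip.
have [Dphi _] := wga_step jm.
rewrite wga_resS ipBr // ipZr // res_boundS mulrDl.
apply: lerD; first exact: IH (ltnW jm).
rewrite -mulrN -ipNr //; apply: ler_wpM2l.
  exact: mulr_ge0 (ltW b_gt0) (wga_coef_ge0 jm).
exact: ip_le_sup_ip (D_sym Dphi).
Qed.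

Lemma wga_coef_lower j : (j < m)%N -> t * `|res j| ^+ 2 <= wga_coef j * res_bound j.
Proof.
move=> jm; have [_ tS_le] := wga_step jm; have B_ge0 := res_bound_ge0 (ltnW jm).
rewrite -(ipxx hip); apply: le_trans (ler_wpM2l (ltW t_gt0) (ip_le_res_bound _ (ltnW jm))) _.
by rewrite mulrCA [_ * res_bound j]mulrC; apply: ler_wpM2l.
Qed.

Lemma sqr_norm_wga_resS j : (j < m)%N ->
  `|res j.+1| ^+ 2 = `|res j| ^+ 2 - b * (2 - b) * wga_coef j ^+ 2.
Proof.
move=> jm; have [Dphi _] := wga_step jm.
by rewrite wga_resS (sqr_normBZ hip _ _ (D_unit Dphi)) /wga_coef; ring.
Qed.

Lemma sqr_norm_wga_res_le j : (j <= m)%N ->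
  `|res j| ^+ 2 * (1 + j%:R * (b * (2 - b) * t ^+ 2)) <= res_bound j ^+ 2.
Proof.
elim: j => [_|j IH jm].
  rewrite mulr0n mul0r addr0 mulr1 res_bound0 ler_sqr ?nnegrE ?fine_A1norm_ge0 //.
  exact: (norm_le_A1norm hip D_unit A1f).
have bc_ge0 : 0 <= b * wga_coef j := mulr_ge0 (ltW b_gt0) (wga_coef_ge0 jm).
have B_ge0 := res_bound_ge0 (ltnW jm).
rewrite sqr_norm_wga_resS // res_boundS -(natr1 j).
apply: le_trans (sq_bound_step _ _ _ (wga_coef_lower jm) _ (IH (ltnW jm))) _.
- exact: beta_ge0.
- exact: ler0n.
- exact: mulr_ge0 (ltW t_gt0) (sqr_ge0 _).
- by rewrite -sqr_norm_wga_resS ?sqr_ge0.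
- nra.
Qed.

Section Potential.
Variable alpha : R.
Hypotheses (alpha_ge0 : 0 <= alpha) (h_alpha : 2 * alpha <= (1 - alpha) * ((2 - b) * t)).
Hypothesis f_neq0 : f != 0.

Let A_gt0 : 0 < A.
Proof. by apply: lt_le_trans (norm_le_A1norm hip D_unit A1f); rewrite normr_gt0. Qed.

Let alpha_le1 : alpha <= 1.
Proof.
have : 0 < (2 - b) * t by rewrite mulr_gt0 ?subr_gt0.
by move: h_alpha; rewrite -subr_ge0; nra.
Qed.

Lemma ln_potential_wga_res_le j : (j <= m)%N -> 0 < `|res j| ->
  (1 - alpha) * ln (`|res j| ^+ 2) + 2 * alpha * ln (res_bound j)
    <= (1 - alpha) * ln (`|f| ^+ 2) + 2 * alpha * ln A.
Proof.
elim: j => [_ _|j IH jm res_gt0]; first by rewrite res_bound0.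
have B_gt0 : 0 < res_bound j := lt_le_trans A_gt0 (A1norm_le_res_bound (ltnW jm)).
have res'_gt0 : 0 < `|res j| ^+ 2 - b * (2 - b) * wga_coef j ^+ 2.
  by rewrite -sqr_norm_wga_resS // exprn_gt0.
have res_j_gt0 : 0 < `|res j|.
  have : 0 < `|res j| ^+ 2.
    by apply: lt_le_trans res'_gt0 _; rewrite gerBl mulr_ge0 ?sqr_ge0.
  by rewrite exprn_even_gt0 //= lt_def normr_ge0 andbT.
apply: le_trans (IH (ltnW jm) res_j_gt0).
rewrite sqr_norm_wga_resS // res_boundS.
apply: ln_potential_step => //; last exact: wga_coef_lower.
- by rewrite (ltW b_gt0) (ltW b_lt2).
- by rewrite alpha_ge0 alpha_le1.
- exact: h_alpha.
- exact: wga_coef_ge0 jm.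
Qed.

Lemma norm_wga_res_le :
  `|res m| <= `|f| `^ (1 - alpha) * A `^ alpha *
    (1 + m%:R * b * (2 - b) * t ^+ 2) `^ (- (alpha / 2)).
Proof.
have [res0|res_neq0] := eqVneq `|res m| 0.
  by rewrite res0 !mulr_ge0 ?powR_ge0.
have res_gt0 : 0 < `|res m| by rewrite lt_neqAle eq_sym res_neq0 normr_ge0.
have B_gt0 : 0 < res_bound m := lt_le_trans A_gt0 (A1norm_le_res_bound (leqnn m)).
have -> : m%:R * b * (2 - b) * t ^+ 2 = m%:R * (b * (2 - b) * t ^+ 2) by rewrite !mulrA.
apply: (le_powR_of_ln_potential res_gt0 _ A_gt0 B_gt0 _ alpha_ge0).
- by rewrite normr_gt0.
- by rewrite mulr_ge0 // mulr_ge0 // sqr_ge0.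
- exact: sqr_norm_wga_res_le (leqnn m).
- exact: ln_potential_wga_res_le (leqnn m) res_gt0.
Qed.

End Potential.

End WGA.

Unset Implicit Arguments.

Theorem theorem2p2 (R : realType) (H : completeNormedModType R) (ip : H -> H -> R)
    (t b : R) (m : nat) (alpha : R) (D : set H) (f : H) (phi : nat -> H) :
  inner_product ip ->
  0 < t <= 1 -> 0 < b <= 1 -> (1 <= m)%N ->
  0 < alpha <= (2 - b) * t / ((2 - b) * t + 2) ->
  dictionary D -> f != 0 -> (A1norm D f < +oo)%E ->
  wga_realization ip t b D f phi m ->
  `|f - wga_approx ip b f phi m| <=
    `|f| `^ (1 - alpha) * (fine (A1norm D f)) `^ alpha *
    (1 + m%:R * b * (2 - b) * t ^+ 2) `^ (- (alpha / 2)).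
Proof.
move=> hip /andP[t_gt0 _] /andP[b_gt0 b_le1] _ /andP[alpha_gt0 alpha_le].
move=> [D_unit [_ D_sym]] f_neq0 A1f hreal.
have b_lt2 : b < 2 by apply: le_lt_trans b_le1 _; rewrite ltr1n.
have s_gt0 : 0 < (2 - b) * t by rewrite mulr_gt0 // subr_gt0.
rewrite -wga_resE; apply: norm_wga_res_le => //; first exact: ltW.
by move: alpha_le; rewrite ler_pdivlMr ?addr_gt0 //; lra.
Qed.
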